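(* Consider an extended Runge--Kutta method with parameters $a_{ij}$ ($1\le i\le s$, $1\le j\le m$), $b_i$ ($1\le i\le m$), and full-rank $(m-s)\times m$ matrix $d=(d_{ij})$. Set $a_{ij}=0$ for $i>s$, and let $M$ be the $m\times m$ matrix $M_{ij}=b_ib_j-b_ia_{ij}-b_ja_{ji}$ ($i,j=1,\dots,m$). Let $V$ be an $m\times s$ matrix whose columns form a basis of the nullspace of $d$. If $b_i=0$ for $i=s+1,\dots,m$ and $V^\top MV=0$, then the extended Runge--Kutta method is quadratic-preserving and symplectic.
   Context: For an ODE $\dot z=f(z)$ on $\mathbb{R}^n$, the extended Runge--Kutta method maps $z_0$ to $z_1$ defined by the equations, with unknowns $k_1,\dots,k_m\in\mathbb{R}^n$: $Z_i=z_0+h\sum_{j=1}^m a_{ij}k_j$ ($i=1,\dots,s$), $k_i=f(Z_i)$ ($i=1,\dots,s$), $0=\sum_{j=1}^m d_{ij}k_j$ ($i=1,\dots,m-s$), $z_1=z_0+h\sum_{i=1}^m b_ik_i$. Quadratic-preserving means: whenever $Q(z)=z^\top Cz$ ($C$ symmetric) is a first integral of $f$, every step satisfies $z_1^\top Cz_1=z_0^\top Cz_0$. Symplectic means: applied to any Hamiltonian vector field on $\mathbb{R}^{2n}$ with the canonical symplectic form, the step map $z_0\mapsto z_1$ is symplectic. *)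

From HB Require Import structures.
From mathcomp Require Import all_boot all_order all_algebra.
From mathcomp Require Import all_classical all_reals all_analysis.
Set Implicit Arguments. Unset Strict Implicit. Unset Printing Implicit Defensive.
Import Order.TTheory GRing.Theory Num.Theory.
Import numFieldNormedType.Exports.
Local Open Scope ring_scope.
Local Open Scope classical_set_scope.

Section ERK.
Variable R : realType.

(* The coefficient matrix a (s x m) extended by zero rows: a_ij = 0 for i >= s
   (0-based indices). *)
Definition ext_a (s m : nat) (a : 'M[R]_(s, m)) : 'M[R]_m :=
  \matrix_(i < m, j < m)
    oapp (fun i' : 'I_s => a i' j) 0 (insub (val i) : option 'I_s).

Definition Mmat (s m : nat) (a : 'M[R]_(s, m)) (b : 'I_m -> R) : 'M[R]_m :=
  \matrix_(i, j) (b i * b j - b i * ext_a a i j - b j * ext_a a j i).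

Definition erk_step (N s m : nat) (a : 'M[R]_(s, m)) (b : 'I_m -> R)
  (d : 'M[R]_(m - s, m)) (h : R) (f : 'cV[R]_N -> 'cV[R]_N)
  (z0 : 'cV[R]_N) (k : 'I_m -> 'cV[R]_N) (z1 : 'cV[R]_N) : Prop :=
  [/\ (forall i : 'I_m, (i < s)%N ->
          k i = f (z0 + h *: \sum_(j < m) ext_a a i j *: k j)),
      (forall i : 'I_(m - s), \sum_(j < m) d i j *: k j = 0) &
      z1 = z0 + h *: \sum_(i < m) b i *: k i].

Definition first_integral (N : nat) (f : 'cV[R]_N -> 'cV[R]_N)
  (I : 'cV[R]_N -> R) : Prop :=
  forall z, differentiable I z /\ 'd I z (f z) = 0.

Definition quadform (N : nat) (C : 'M[R]_N) (z : 'cV[R]_N) : R :=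
  (z^T *m C *m z) 0 0.

Definition quadratic_preserving (s m : nat) (a : 'M[R]_(s, m))
  (b : 'I_m -> R) (d : 'M[R]_(m - s, m)) : Prop :=
  forall (N : nat) (f : 'cV[R]_N -> 'cV[R]_N) (C : 'M[R]_N),
    C^T = C -> first_integral f (quadform C) ->
    forall h z0 k z1, erk_step a b d h f z0 k z1 ->
      quadform C z1 = quadform C z0.

Definition Jcan (n : nat) : 'M[R]_(n + n) :=
  block_mx 0 1%:M (- 1%:M) 0.

Definition omega (n : nat) (u v : 'cV[R]_(n + n)) : R :=
  (u^T *m Jcan n *m v) 0 0.

(* f is the Hamiltonian vector field of some differentiable H:
   dH(z) u = omega(f z, u), i.e. dq/dt = dH/dp, dp/dt = - dH/dq. *)
Definition hamiltonian_vf (n : nat) (f : 'cV[R]_(n + n) -> 'cV[R]_(n + n))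
  : Prop :=
  exists H : 'cV[R]_(n + n) -> R,
    forall z, differentiable H z /\ forall u, 'd H z u = omega (f z) u.

Definition symplectic_on (n : nat) (U : set 'cV[R]_(n + n))
  (Phi : 'cV[R]_(n + n) -> 'cV[R]_(n + n)) : Prop :=
  forall z, U z -> differentiable Phi z /\
    forall u v, omega ('d Phi z u) ('d Phi z v) = omega u v.

(* The method is symplectic: for every (smooth) Hamiltonian vector field and
   every step size, any differentiable branch z0 |-> k(z0) of solutions of the
   step equations on an open set U yields a step map that is symplectic on U. *)
Definition erk_symplectic (s m : nat) (a : 'M[R]_(s, m))
  (b : 'I_m -> R) (d : 'M[R]_(m - s, m)) : Prop :=
  forall (n : nat) (f : 'cV[R]_(n + n) -> 'cV[R]_(n + n)),
    hamiltonian_vf f -> (forall z, differentiable f z) ->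
    forall (h : R) (U : set 'cV[R]_(n + n))
      (k : 'I_m -> 'cV[R]_(n + n) -> 'cV[R]_(n + n)),
      open U ->
      (forall i z, U z -> differentiable (k i) z) ->
      (forall z, U z ->
         erk_step a b d h f z (fun i => k i z)
                  (z + h *: \sum_(i < m) b i *: k i z)) ->
      symplectic_on U (fun z => z + h *: \sum_(i < m) b i *: k i z).

End ERK.

(* For a bilinear form B, put xi_i = u + h sum_j a_ij P_j and eta_i = v + h sum_j a_ij Q_j.
   Expanding, B(u + h sum_i b_i P_i, v + h sum_i b_i Q_i) - B(u, v) equals
   h sum_i b_i (B(P_i, eta_i) + B(xi_i, Q_i)) + h^2 sum_ij M_ij B(P_i, Q_j).
   For a quadratic first integral z^T C z take P = Q = k: then P_i = f(xi_i) and
   B(f y, y) + B(y, f y) = 0 is the derivative of the invariant along f.  For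
   symplecticity take P, Q the derivatives of the k_i in two directions: by the chain
   rule P_i = f'(Y_i) xi_i, and omega(f' x, y) + omega(x, f' y) = 0 because J f' is the
   Hessian of the Hamiltonian, which is symmetric (Schwarz).  The stages i >= s carry no
   such relation, but there b_i = 0.  Finally the coordinate columns of P and Q lie in
   ker d = range V, so the M-term is a combination of entries of V^T M V = 0. *)
From HB Require Import structures.
From mathcomp Require Import all_boot all_order all_algebra.
From mathcomp Require Import all_classical all_reals all_analysis.
From mathcomp Require Import ring lra.
Import numFieldNormedType.Exports.
Import Order.TTheory GRing.Theory Num.Theory.
Local Open Scope ring_scope.
Local Open Scope classical_set_scope.
Set Implicit Arguments. Unset Strict Implicit. Unset Printing Implicit Defensive.

Definition bform (R : comNzRingType) N (B : 'M[R]_N) (p q : 'cV[R]_N) : R :=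
  (p^T *m B *m q) 0 0.

Lemma bform_is_bilinear (R : comNzRingType) N (B : 'M[R]_N) :
  bilinear_for (GRing.Scale.Law.clone _ _ *%R _) (GRing.Scale.Law.clone _ _ *%R _)
    (bform B).
Proof.
split=> [q|p] c x y; rewrite /bform.
- by rewrite linearP /= !mulmxDl -!scalemxAl !mxE.
- by rewrite !mulmxDr -!scalemxAr !mxE.
Qed.

HB.instance Definition _ (R : comNzRingType) N (B : 'M[R]_N) :=
  bilinear_isBilinear.Build R _ _ _ _ _ (bform B) (bform_is_bilinear B).

Lemma bformE (R : comNzRingType) N (B : 'M[R]_N) p q :
  bform B p q = \sum_i \sum_j p i 0 * B i j * q j 0.
Proof.
rewrite /bform mxE; under eq_bigr do rewrite mxE mulr_suml.
rewrite exchange_big /=; apply: eq_bigr => i _; apply: eq_bigr => j _.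
by rewrite mxE.
Qed.

Definition rk_update (R : comNzRingType) (V : lmodType R) n (c : 'I_n -> R)
  (h : R) (X : 'I_n -> V) (w : V) : V := w + h *: \sum_j c j *: X j.

Definition algstab_mx (R : comNzRingType) m (A : 'M[R]_m) (b : 'I_m -> R) :
  'M[R]_m := \matrix_(i, j) (b i * b j - b i * A i j - b j * A j i).

Section BilinearRKIdentity.
Variables (R : comNzRingType) (V : lmodType R) (B : {biscalar V}).
Variables (m : nat) (h : R).

Lemma bilinear_rk_updatel (c : 'I_m -> R) X w y :
  B (rk_update c h X w) y = B w y + h * \sum_j c j * B (X j) y.
Proof.
rewrite /rk_update linearDl linearZl_LR linear_sumlz.
by congr (_ + _ * _); apply: eq_bigr => j _; rewrite linearZl_LR.
Qed.

Lemma bilinear_rk_updater (c : 'I_m -> R) X w y :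
  B y (rk_update c h X w) = B y w + h * \sum_j c j * B y (X j).
Proof.
rewrite /rk_update linearDr linearZr_LR linear_sumr.
by congr (_ + _ * _); apply: eq_bigr => j _; rewrite linearZr_LR.
Qed.

Lemma bilinear_rk_update (A : 'M[R]_m) (b : 'I_m -> R) (u v : V) (P Q : 'I_m -> V) :
  B (rk_update b h P u) (rk_update b h Q v) =
  B u v + h * \sum_i b i * (B (P i) (rk_update (A i) h Q v) +
                            B (rk_update (A i) h P u) (Q i))
        + h ^+ 2 * \sum_i \sum_j algstab_mx A b i j * B (P i) (Q j).
Proof.
rewrite bilinear_rk_updatel; under eq_bigr do rewrite bilinear_rk_updater.
rewrite bilinear_rk_updater.
under [in RHS]eq_bigr do rewrite bilinear_rk_updatel bilinear_rk_updater.
have swapA : \sum_i b i * \sum_j A i j * B (P j) (Q i) =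
             \sum_i \sum_j b j * A j i * B (P i) (Q j).
  under eq_bigr do rewrite mulr_sumr.
  by rewrite exchange_big; apply: eq_bigr => i _; apply: eq_bigr => j _; rewrite mulrA.
have -> : \sum_i \sum_j algstab_mx A b i j * B (P i) (Q j) =
  \sum_i b i * \sum_j b j * B (P i) (Q j) - \sum_i b i * \sum_j A i j * B (P i) (Q j)
  - \sum_i b i * \sum_j A i j * B (P j) (Q i).
  rewrite swapA -!sumrB; apply: eq_bigr => i _.
  rewrite !mulr_sumr -!sumrB; apply: eq_bigr => j _; rewrite mxE; ring.
under eq_bigr => i _ do rewrite mulrDr (mulrCA (b i) h).
under [in RHS]eq_bigr => i _ do rewrite !mulrDr (mulrCA (b i) h) (mulrCA (b i) h).
rewrite !big_split /= -!mulr_sumr; ring.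
Qed.

Lemma bilinear_rk_update_eq (A : 'M[R]_m) (b : 'I_m -> R) u v P Q :
  (forall i, b i * (B (P i) (rk_update (A i) h Q v) +
                    B (rk_update (A i) h P u) (Q i)) = 0) ->
  \sum_i \sum_j algstab_mx A b i j * B (P i) (Q j) = 0 ->
  B (rk_update b h P u) (rk_update b h Q v) = B u v.
Proof. by move=> stage M0; rewrite (bilinear_rk_update A) big1 // M0 !mulr0 !addr0. Qed.

End BilinearRKIdentity.

Section KernelFamilies.
Variables (R : comNzRingType) (N m : nat).

Definition coord_col (P : 'I_m -> 'cV[R]_N) (c : 'I_N) : 'cV[R]_m :=
  \col_i P i c 0.

Lemma sum_bform_exchange (B : 'M[R]_N) (M : 'M[R]_m) (P Q : 'I_m -> 'cV[R]_N) :
  \sum_i \sum_j M i j * bform B (P i) (Q j) =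
  \sum_c \sum_c' B c c' * bform M (coord_col P c) (coord_col Q c').
Proof.
under eq_bigr do under eq_bigr do
  (rewrite bformE mulr_sumr; under eq_bigr do rewrite mulr_sumr).
under [RHS]eq_bigr do under eq_bigr do
  (rewrite bformE mulr_sumr; under eq_bigr do rewrite mulr_sumr).
under eq_bigr do rewrite exchange_big /=.
under eq_bigr do under eq_bigr do rewrite exchange_big /=.
rewrite exchange_big /=; under eq_bigr do rewrite exchange_big /=.
apply: eq_bigr => c _; apply: eq_bigr => c' _; apply: eq_bigr => i _.
by apply: eq_bigr => j _; rewrite !mxE; ring.
Qed.

Lemma mul_coord_col (k : nat) (d : 'M[R]_(k, m)) (P : 'I_m -> 'cV[R]_N) c :
  (forall r, \sum_j d r j *: P j = 0) -> d *m coord_col P c = 0.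
Proof.
move=> dP; apply/matrixP => r i; rewrite ord1 !mxE.
have := congr1 (fun x : 'cV[R]_N => x c 0) (dP r); rewrite /= summxE mxE => E.
by rewrite -[in RHS]E; apply: eq_bigr => j _; rewrite !mxE.
Qed.

Lemma sum_bform_kernel_eq0 (k n : nat) (d : 'M[R]_(k, m)) (W : 'M[R]_(m, n))
    (B : 'M[R]_N) (M : 'M[R]_m) (P Q : 'I_m -> 'cV[R]_N) :
  (forall x : 'cV[R]_m, d *m x = 0 -> exists y, x = W *m y) ->
  W^T *m M *m W = 0 ->
  (forall r, \sum_j d r j *: P j = 0) -> (forall r, \sum_j d r j *: Q j = 0) ->
  \sum_i \sum_j M i j * bform B (P i) (Q j) = 0.
Proof.
move=> kerW WMW dP dQ; rewrite sum_bform_exchange.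
apply: big1 => c _; apply: big1 => c' _.
have [y ->] := kerW _ (mul_coord_col c dP).
have [y' ->] := kerW _ (mul_coord_col c' dQ).
by rewrite /bform trmx_mul !mulmxA -(mulmxA _ _ M) -(mulmxA _ (W^T *m M)) WMW
  mulmx0 mul0mx mxE mulr0.
Qed.

End KernelFamilies.

Section FrechetCalculus.
Variable R : realType.

(* Frechet approximation at a single point by a prescribed map [L]; unlike
   [differentiable], it asks for no continuity of [L]. *)
Definition linear_approx_at (U W : normedModType R) (g L : U -> W) (z : U) :=
  forall eps, 0 < eps -> exists2 del, 0 < del &
    forall y, `|y| < del -> `|g (z + y) - g z - L y| <= eps * `|y|.

Lemma differentiable_linear_approx (U W : normedModType R) (g : U -> W) z :
  differentiable g z -> linear_approx_at g ('d g z) z.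
Proof.
move=> dg eps e0.
have /eqaddoP /(_ _ e0) /nbhs_norm0P [del d0 Hd] := diff_locally dg.
exists del => // y /Hd /=; congr (`|_| <= _).
by rewrite !fctE /= [y + z]addrC opprD addrA.
Qed.

Lemma mulr_divD1_le (c e : R) : 0 <= c -> 0 < e -> c * (e / (c + 1)) <= e.
Proof.
move=> c0 e0; have c1 : 0 < c + 1 by rewrite ltr_wpDl.
by rewrite mulrA ler_pdivrMr // mulrC ler_pM2l // lerDl.
Qed.

Lemma linear_approx_comp (U W W' : normedModType R) (g L : U -> W) z
    (phi : {additive W -> W'}) (K : R) :
  (forall p, `|phi p| <= K * `|p|) ->
  linear_approx_at g L z -> linear_approx_at (phi \o g) (phi \o L) z.
Proof.
move=> phiK gL eps e0; have K1 : 0 < `|K| + 1 by rewrite ltr_wpDl.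
have [del d0 Hd] := gL (eps / (`|K| + 1)) (divr_gt0 e0 K1).
exists del => // y /Hd Hy; rewrite /= -!raddfB.
apply: (le_trans (phiK _)); apply: (le_trans (ler_wpM2r (normr_ge0 _) (ler_norm K))).
apply: (le_trans (ler_wpM2l (normr_ge0 _) Hy)).
by rewrite mulrA ler_wpM2r // mulr_divD1_le.
Qed.

Lemma is_derive_line (U : normedModType R) (H : U -> R) (P w : U) (r : R) :
  differentiable H (P + r *: w) ->
  is_derive r 1 (fun r => H (P + r *: w)) ('d H (P + r *: w) w).
Proof.
move=> dH; pose line (r : R) := P + r *: w.
have dline : is_diff r line ( *:%R^~ w).
  by rewrite /line -[( *:%R^~ w)]add0r; exact: is_diffD.
have dHline : differentiable (H \o line) r :=
  differentiable_comp (@ex_diff _ _ _ _ _ _ _ dline) dH.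
apply: DeriveDef; first exact: diff_derivable.
by rewrite (deriveE _ dHline) diff_comp // !diff_val /= scale1r.
Qed.

Lemma mvt_line_difference (U : normedModType R) (H : U -> R) (P Q w : U) (t : R) :
  0 < t -> (forall z, differentiable H z) ->
  exists2 xi, 0 < xi < t &
    H (P + t *: w) - H (Q + t *: w) - (H P - H Q) =
    t * ('d H (P + xi *: w) w - 'd H (Q + xi *: w) w).
Proof.
move=> t0 dH.
pose phi : R -> R := (fun r : R => H (P + r *: w)) - (fun r => H (Q + r *: w)).
have der (r : R) : is_derive r 1 phi ('d H (P + r *: w) w - 'd H (Q + r *: w) w).
  by apply: is_deriveB; exact: is_derive_line.
have [xi /[!in_itv] /= xit E] := MVT t0 (fun r _ => der r)
  (derivable_within_continuous (fun r _ => @ex_derive _ _ _ _ _ _ _ (der r))).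
by exists xi => //; rewrite mulrC -[t in RHS]subr0 -E /phi !fctE /= !scale0r !addr0.
Qed.

(* Both sides are [1/t] times the mixed second difference
   [H (Z + t x + t w) - H (Z + t x) - H (Z + t w) + H Z]. *)
Lemma second_difference_mvt (U : normedModType R) (H : U -> R) (Z x w : U) (t : R) :
  0 < t -> (forall z, differentiable H z) ->
  exists xi eta, [/\ 0 <= xi <= t, 0 <= eta <= t &
    'd H (Z + (t *: x + xi *: w)) w - 'd H (Z + xi *: w) w =
    'd H (Z + (t *: w + eta *: x)) x - 'd H (Z + eta *: x) x].
Proof.
move=> t0 dH.
have [xi /andP[xi0 xit] E1] := mvt_line_difference (Z + t *: x) Z w t0 dH.
have [eta /andP[eta0 etat] E2] := mvt_line_difference (Z + t *: w) Z x t0 dH.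
exists xi, eta; split; rewrite ?ltW //.
apply: (mulfI (lt0r_neq0 t0)); rewrite !addrA -E1 -E2 (addrAC Z); ring.
Qed.

Lemma normrZ_le (U : normedModType R) (a t : R) (p : U) :
  0 <= a <= t -> `|a *: p| <= t * `|p|.
Proof. by case/andP=> a0 ait; rewrite normrZ ger0_norm // ler_wpM2r. Qed.

Lemma ler_normBB (a b c d : R) : `|a - b - (c - d)| <= `|a| + `|b| + `|c| + `|d|.
Proof.
have := ler_normB a b; have := ler_normB c d; have := ler_normB (a - b) (c - d).
lra.
Qed.

Lemma diff_symmetric_le (U : normedModType R) (H : U -> R) (Z x w : U)
    (Lw Lx : U -> R) (e : R) :
  (forall z, differentiable H z) -> linear Lw -> linear Lx ->
  linear_approx_at (fun z => 'd H z w) Lw Z ->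
  linear_approx_at (fun z => 'd H z x) Lx Z ->
  0 < e -> `|Lw x - Lx w| <= 4 * (`|x| + `|w|) * e.
Proof.
move=> dH linw linx aw ax e0; set K := `|x| + `|w|.
have K0 : 0 <= K by rewrite addr_ge0.
have [d1 d10 H1] := aw e e0; have [d2 d20 H2] := ax e e0.
pose t := Num.min d1 d2 / (K + 1).
have t0 : 0 < t by rewrite divr_gt0 ?lt_min ?d10 ?ltr_wpDl.
have /andP[tK1 tK2] : (t * K < d1) && (t * K < d2).
  by rewrite -lt_min mulrAC ltr_pdivrMr ?ltr_wpDl // ltr_pM2l ?lt_min ?d10 // ltrDl.
have err_le (u : U) L d : t * K < d ->
    (forall y, `|y| < d -> `|'d H (Z + y) u - 'd H Z u - L y| <= e * `|y|) ->
    forall y, `|y| <= t * K -> `|'d H (Z + y) u - 'd H Z u - L y| <= e * (t * K).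
  move=> tKd Hd y yK; apply: le_trans (Hd y (le_lt_trans yK tKd)) _.
  by rewrite ler_pM2l.
have ew := err_le w Lw d1 tK1 H1; have ex := err_le x Lx d2 tK2 H2.
have tt : 0 <= t <= t by rewrite lexx ltW.
have [xi [eta [xit etat E]]] := second_difference_mvt Z x w t0 dH.
set y1 := t *: x + xi *: w in E; set y2 := xi *: w in E.
set z1 := t *: w + eta *: x in E; set z2 := eta *: x in E.
have ny1 : `|y1| <= t * K.
  by rewrite (le_trans (ler_normD _ _)) // mulrDr lerD ?normrZ_le.
have ny2 : `|y2| <= t * K.
  by rewrite (le_trans (normrZ_le w xit)) // ler_wpM2l ?(ltW t0) // ler_wpDl.
have nz1 : `|z1| <= t * K.
  by rewrite (le_trans (ler_normD _ _)) // addrC mulrDr lerD ?normrZ_le.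
have nz2 : `|z2| <= t * K.
  by rewrite (le_trans (normrZ_le x etat)) // ler_wpM2l ?(ltW t0) // ler_wpDr.
rewrite -(ler_pM2l t0) -[t in t * `|_|](gtr0_norm t0) -normrM.
have -> : t * (Lw x - Lx w) =
    ('d H (Z + z1) x - 'd H Z x - Lx z1) - ('d H (Z + z2) x - 'd H Z x - Lx z2) -
    (('d H (Z + y1) w - 'd H Z w - Lw y1) - ('d H (Z + y2) w - 'd H Z w - Lw y2)).
  rewrite /y1 /z1 !linw !linx -/y2 -/z2 -[t *: Lw x]/(t * Lw x) -[t *: Lx w]/(t * Lx w).
  by move/eqP: E; rewrite -subr_eq => /eqP <-; ring.
apply: le_trans (ler_normBB _ _ _ _) _.
have -> : t * (4 * K * e) = e * (t * K) + e * (t * K) + e * (t * K) + e * (t * K).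
  by ring.
by rewrite !lerD ?ex ?ew.
Qed.

Lemma diff_symmetric (U : normedModType R) (H : U -> R) (Z x w : U)
    (Lw Lx : U -> R) :
  (forall z, differentiable H z) -> linear Lw -> linear Lx ->
  linear_approx_at (fun z => 'd H z w) Lw Z ->
  linear_approx_at (fun z => 'd H z x) Lx Z -> Lw x = Lx w.
Proof.
move=> dH linw linx aw ax; have K4 : 0 <= 4 * (`|x| + `|w|) by rewrite !mulr_ge0.
apply/eqP; rewrite -subr_eq0 -normr_le0; apply/ler_addgt0Pr => e e0.
have e' := divr_gt0 e0 (ltr_wpDl K4 ltr01).
by rewrite add0r (le_trans (diff_symmetric_le dH linw linx aw ax e')) ?mulr_divD1_le.
Qed.

Lemma is_derive_quadratic (U W : normedModType R) (g : U -> W) (z v : U) (c e : W) :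
  (forall t : R, g (t *: v + z) - g z = t *: c + t ^+ 2 *: e) -> is_derive z v g c.
Proof.
move=> gE.
have L : (fun t : R => t^-1 *: ((g \o shift z) (t *: v) - g z)) @ 0^' --> c.
  apply: (@cvg_trans _ ((fun t : R => c + t *: e) @ 0^')).
    apply: near_eq_cvg; near=> t.
    have t0 : t != 0 by near: t; exact: nbhs_dnbhs_neq.
    by rewrite /= gE scalerDr !scalerA mulVf // scale1r expr2 mulrA mulVf // mul1r.
  apply: cvg_within_filter.
  suff : (fun t : R => c + t *: e) @ 0 --> c + 0 *: e by rewrite scale0r addr0.
  by apply: cvgD; [exact: cvg_cst | exact: cvgZl cvg_id].
by split; [apply/cvg_ex; exists c | apply: cvg_lim].
Unshelve. all: by end_near.
Qed.

Lemma rk_update_fun (U : normedModType R) n (c : 'I_n -> R) (h : R)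
    (g : 'I_n -> U -> U) :
  (fun y => rk_update c h (g^~ y) y) = id + h *: \sum_i c i *: g i.
Proof. by apply: funext => y; rewrite /rk_update !fctE fct_sumE. Qed.

Lemma is_derive_rk_update (U : normedModType R) n (c : 'I_n -> R) (h : R)
    (g : 'I_n -> U -> U) z u :
  (forall i, derivable (g i) z u) ->
  is_derive z u (fun y => rk_update c h (g^~ y) y)
    (rk_update c h (fun i => 'D_u (g i) z) u).
Proof.
move=> dg; rewrite rk_update_fun.
apply: is_deriveD; apply: is_deriveZ; apply: is_derive_sum => i.
exact/is_deriveZ/derivableP.
Qed.

Lemma differentiable_rk_update (U : normedModType R) n (c : 'I_n -> R) (h : R)
    (g : 'I_n -> U -> U) z :
  (forall i, differentiable (g i) z) ->
  differentiable (fun y => rk_update c h (g^~ y) y) z.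
Proof.
move=> dg; rewrite rk_update_fun.
apply: differentiableD => //; apply/differentiableZ/differentiable_sum => i.
exact: differentiableZ.
Qed.

End FrechetCalculus.

Section InfinitesimalInvariants.
Variable R : realType.

Lemma first_integral_quadform N (f : 'cV[R]_N -> 'cV[R]_N) (C : 'M[R]_N) :
  first_integral f (quadform C) -> forall y, bform C (f y) y + bform C y (f y) = 0.
Proof.
move=> FI y; have [dQ <-] := FI y; rewrite -deriveE //; apply/esym/derive_val.
apply: (is_derive_quadratic (e := bform C (f y) (f y))) => t.
rewrite /quadform -!/(bform C _ _) linearDl !linearDr !linearZl_LR !linearZr_LR.
by rewrite /GRing.scale /=; ring.
Qed.

Lemma normr_coord_le m n (M : 'M[R]_(m, n)) i j : `|M i j| <= `|M|.
Proof. by rewrite [leRHS]/Num.norm /= mx_normrE (le_bigmax _ _ (i, j)). Qed.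

Lemma bform_bound N (B : 'M[R]_N) p q :
  `|bform B p q| <= (\sum_i \sum_j `|B i j|) * `|p| * `|q|.
Proof.
rewrite bformE !mulr_suml; apply: (le_trans (ler_norm_sum _ _ _)).
apply: ler_sum => i _; rewrite !mulr_suml; apply: (le_trans (ler_norm_sum _ _ _)).
apply: ler_sum => j _; rewrite !normrM [`|p i 0| * _]mulrC.
by rewrite !ler_pM ?mulr_ge0 ?normr_coord_le.
Qed.

Lemma omega_antisym n (u v : 'cV[R]_(n + n)) : omega u v = - omega v u.
Proof.
have trJ : (Jcan R n)^T = - Jcan R n.
  by rewrite /Jcan tr_block_mx !trmx0 opp_block_mx oppr0 opprK linearN /= trmx1.
transitivity ((u^T *m Jcan R n *m v)^T 0 0); first by rewrite mxE.
by rewrite !trmx_mul trmxK trJ mulmxA mulmxN mulNmx mxE.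
Qed.

(* [J f'(Z)] is the Hessian of the Hamiltonian, hence symmetric. *)
Lemma hamiltonian_diff_skew n (f : 'cV[R]_(n + n) -> 'cV[R]_(n + n)) :
  hamiltonian_vf f -> (forall z, differentiable f z) ->
  forall Z x y, omega ('d f Z x) y + omega x ('d f Z y) = 0.
Proof.
move=> [H dH] df Z x y; pose J := Jcan R n.
have approx u : linear_approx_at (fun z => 'd H z u)
                  (fun v => bform J ('d f Z v) u) Z.
  have -> : (fun z => 'd H z u) = applyr (bform J) u \o f.
    by apply: funext => z; case: (dH z) => _ ->.
  apply: (linear_approx_comp (K := (\sum_i \sum_j `|J i j|) * `|u|)).
    by move=> p; rewrite mulrAC bform_bound.
  exact: differentiable_linear_approx.
have lin u : linear (fun v => bform J ('d f Z v) u).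
  by move=> c p q; rewrite /= linearP linearPl.
rewrite (omega_antisym x); apply/eqP; rewrite subr_eq0; apply/eqP.
exact: diff_symmetric (fun z => (dH z).1) (lin y) (lin x) (approx y) (approx x).
Qed.

End InfinitesimalInvariants.

Section ERKStepDerivative.
Variables (R : realType) (N s m : nat) (a : 'M[R]_(s, m)) (b : 'I_m -> R).
Variables (d : 'M[R]_(m - s, m)) (f : 'cV[R]_N -> 'cV[R]_N) (h : R).
Variables (U : set 'cV[R]_N) (k : 'I_m -> 'cV[R]_N -> 'cV[R]_N).
Hypotheses (df : forall y, differentiable f y) (oU : open U).
Hypothesis dk : forall i z, U z -> differentiable (k i) z.
Hypothesis step : forall z, U z ->
  erk_step a b d h f z (fun i => k i z) (z + h *: \sum_i b i *: k i z).
Variable z : 'cV[R]_N.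
Hypothesis Uz : U z.

Let nbhsU : nbhs z U. Proof. exact: open_nbhs_nbhs. Qed.
Let derivable_k i u : derivable (k i) z u. Proof. exact/diff_derivable/dk. Qed.

Lemma diff_step_map u :
  'd (fun y => rk_update b h (k^~ y) y) z u =
  rk_update b h (fun i => 'D_u (k i) z) u.
Proof.
rewrite -deriveE; last exact: differentiable_rk_update (fun i => dk i Uz).
exact: (@derive_val _ _ _ _ _ _ _
  (@is_derive_rk_update _ _ _ b h k z u (fun j => @derivable_k j u))).
Qed.

Lemma derive_stage (i : 'I_m) u : (i < s)%N ->
  'D_u (k i) z =
  'd f (rk_update (ext_a a i) h (k^~ z) z)
       (rk_update (ext_a a i) h (fun j => 'D_u (k j) z) u).
Proof.
move=> lis; pose Y y := rk_update (ext_a a i) h (k^~ y) y.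
have -> : 'D_u (k i) z = 'D_u (f \o Y) z.
  apply: near_eq_derive; apply: filterS nbhsU => y Uy.
  by case: (step Uy) => stage _ _; exact: stage i lis.
have dY : differentiable Y z := differentiable_rk_update _ _ (fun j => dk j Uz).
have dfY : differentiable (f \o Y) z := differentiable_comp dY (df _).
rewrite (deriveE _ dfY).
apply: (eq_trans (congr1 (fun L => L u) (diff_comp dY (df (Y z))))).
apply: (f_equal ('d f (Y z))); rewrite -(deriveE _ dY).
exact: (@derive_val _ _ _ _ _ _ _
  (@is_derive_rk_update _ _ _ (ext_a a i) h k z u (fun j => @derivable_k j u))).
Qed.

Lemma derive_constraint r u : \sum_j d r j *: 'D_u (k j) z = 0.
Proof.
have dsum := @is_derive_sum _ _ _ _ (fun j => d r j *: k j) z u _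
  (fun j => is_deriveZ (d r j) (derivableP (@derivable_k j u))).
rewrite -(@derive_val _ _ _ _ _ _ _ dsum) -[RHS](derive_cst 0 z u).
apply: near_eq_derive; apply: filterS nbhsU => y Uy; rewrite fct_sumE.
by case: (step Uy) => _ cons _; apply: cons.
Qed.

End ERKStepDerivative.

Section ERKInvariants.
Variables (R : realType) (s m n : nat) (a : 'M[R]_(s, m)) (b : 'I_m -> R).
Variables (d : 'M[R]_(m - s, m)) (W : 'M[R]_(m, n)).
Hypothesis kerW : forall x : 'cV[R]_m, d *m x = 0 -> exists y, x = W *m y.
Hypothesis b0 : forall i : 'I_m, (s <= i)%N -> b i = 0.
Hypothesis WMW : W^T *m Mmat a b *m W = 0.

Let WAW : W^T *m algstab_mx (ext_a a) b *m W = 0 := WMW.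

Lemma erk_quadratic_preserving : quadratic_preserving a b d.
Proof.
move=> N f C _ FI h z0 k z1 [stage cons ->].
change (bform C (rk_update b h k z0) (rk_update b h k z0) = bform C z0 z0).
apply: (bilinear_rk_update_eq (A := ext_a a)) => [i|].
  have [lis|/b0 ->] := ltnP i s; last by rewrite mul0r.
  by rewrite (stage i lis) (first_integral_quadform FI) mulr0.
exact: (sum_bform_kernel_eq0 _ kerW WAW cons cons).
Qed.

Lemma erk_is_symplectic : erk_symplectic a b d.
Proof.
move=> n' f Hf df h U k oU dk step z Uz.
split; first exact: differentiable_rk_update (fun i => dk i z Uz).
move=> u v; rewrite !(diff_step_map b h dk Uz).
change (bform (Jcan R n') (rk_update b h (fun i => 'D_u (k i) z) u)
          (rk_update b h (fun i => 'D_v (k i) z) v) = bform (Jcan R n') u v).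
apply: (bilinear_rk_update_eq (A := ext_a a)) => [i|].
  have [lis|/b0 ->] := ltnP i s; last by rewrite mul0r.
  rewrite (derive_stage df oU dk step Uz u lis) (derive_stage df oU dk step Uz v lis).
  by rewrite (hamiltonian_diff_skew Hf df) mulr0.
exact: (sum_bform_kernel_eq0 _ kerW WAW (derive_constraint oU dk step Uz ^~ u)
  (derive_constraint oU dk step Uz ^~ v)).
Qed.

End ERKInvariants.

Theorem proposition3 (R : realType) (s m : nat) (a : 'M[R]_(s, m))
  (b : 'I_m -> R) (d : 'M[R]_(m - s, m)) (V : 'M[R]_(m, s)) :
  (s <= m)%N ->
  \rank d = (m - s)%N ->
  (* the columns of V form a basis of the nullspace of d *)
  (forall x : 'cV[R]_m, d *m x = 0 <-> exists y : 'cV[R]_s, x = V *m y) ->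
  \rank V = s ->
  (forall i : 'I_m, (s <= i)%N -> b i = 0) ->
  V^T *m Mmat a b *m V = 0 ->
  quadratic_preserving a b d /\ erk_symplectic a b d.
Proof.
move=> _ _ kerV _ b0 VMV; have kerW x := proj1 (kerV x).
split; [exact: erk_quadratic_preserving kerW b0 VMV
       | exact: erk_is_symplectic kerW b0 VMV].
Qed.
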